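(* Consider the system $x_{k+1}=Ax_k+Bu_k+w_k$ with $w_k^\top w_k\le\bar w$, controlled with input $u_k=u_k^*+u_k^d$, where $u^*_k$ is the nominal control input and $u^d_k$ is an exposure shake produced by the exposure-shake optimization (context) with shake bound $\bar u$. Suppose the tracking error $e_k=x_k-x_k^{goal}$ evolves as $e_{k+1}=A_{\mathrm{cl},k}e_k+d_k$ with $d_k=Bu^d_k+w_k$, and that the closed loop is uniformly exponentially stable: $\|\Phi(k,\ell)\|\le c\rho^{k-\ell}$ for all $k\ge\ell\ge0$, where $\Phi(k,\ell)=A_{\mathrm{cl},k-1}\cdots A_{\mathrm{cl},\ell}$, $c>0$, $\rho\in(0,1)$. Given a tolerance $\varepsilon>0$, if $$\bar u\le\frac{(1-\rho)\varepsilon-c\bar w}{c\|B\|},$$ then the shake sequence is $\varepsilon$-compensable, i.e. $\limsup_{t\to\infty}\|e_t\|\le\varepsilon$.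
   Context: The exposure-shake optimization, posed at the time $k^a$ the system enters suspect mode with exposure horizon $k^{\exp}$ and prediction horizon $N>k^{\exp}$, is $\min_{u^d}\max_{\Delta x^a_i\in\Gamma_i}\sum_{i=k^a}^{k^a+N}(\tilde x_i^\top Q\tilde x_i+\tilde u_i^\top R\tilde u_i)$ subject to the attacker model $\hat x^{a+}_{i+1}=A\hat x^{a+}_i+Bu^a_i+w^a_i+\Delta x^a_i$, $\tilde u_i=u^*_i+u^d_i$, $\hat x_{i+1}=A\hat x_i+B\tilde u_i+w_i$, the exposure constraint $\|\hat x_{k^a+k^{\exp}}-\hat x^a_{k^a+k^{\exp}}\|_\infty\ge\|2\mathbf{T}\|_\infty$ and the magnitude constraint $\|u^d_i+\epsilon_i\|\le\bar u$, where $\mathbf{T}$ is the detector threshold vector, $\Gamma_i=\{r:|r_j|\le\mathbf{T}_j\ \forall j\}$, $\epsilon_i$ are random vectors with positive components, and $Q,R$ are symmetric positive definite. The resulting shake sequence $\{u^d_{k^a},\dots,u^d_{k^a+k^{\exp}-1}\}$ is called $\varepsilon$-compensable if $\limsup_{t\to\infty}\|e_t\|\le\varepsilon$. Norms $\|\cdot\|$ are Euclidean / induced 2-norms. *)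

From mathcomp Require Import all_boot all_order all_algebra.
From mathcomp Require Import all_classical all_reals all_analysis.
Set Implicit Arguments. Unset Strict Implicit. Unset Printing Implicit Defensive.
Import Order.TTheory GRing.Theory Num.Theory.
Local Open Scope ring_scope.
Local Open Scope classical_set_scope.

Definition vnorm {R : realType} {n : nat} (v : 'cV[R]_n) : R :=
  Num.sqrt (\sum_(i < n) v i 0 ^+ 2).

Definition mnorm {R : realType} {p q : nat} (M : 'M[R]_(p, q)) : R :=
  sup [set vnorm (M *m v) | v in [set v : 'cV[R]_q | vnorm v <= 1]].

(* phi_aux Acl l j = Acl (l+j-1) * ... * Acl l  (j factors). *)
Fixpoint phi_aux {R : realType} {n : nat} (Acl : nat -> 'M[R]_n) (l j : nat)
  : 'M[R]_n :=
  match j with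
  | 0 => 1%:M
  | j'.+1 => Acl (l + j')%N *m phi_aux Acl l j'
  end.

Definition Phi {R : realType} {n : nat} (Acl : nat -> 'M[R]_n) (k l : nat)
  : 'M[R]_n := phi_aux Acl l (k - l).

Definition eps_compensable {R : realType} {n : nat} (e : nat -> 'cV[R]_n) (eps : R)
  : Prop := (limn_esup (fun t => (vnorm (e t))%:E) <= eps%:E)%E.

(** Variation of constants writes [e t] as [Phi t 0 *m e 0] plus the sum of
    [Phi t l.+1 *m d l] over [l < t]. Exponential stability bounds the first
    term by [c * rho ^+ t * |e 0|], which vanishes, and the sum by the
    geometric series [c * (|B| ubar + wbar) / (1 - rho)], which the bound on
    [ubar] keeps below [eps]. *)
From mathcomp Require Import all_boot all_order all_algebra.
From mathcomp Require Import all_classical all_reals all_analysis.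
From mathcomp Require Import ring lra.
Import Order.TTheory GRing.Theory Num.Theory.
Local Open Scope ring_scope.
Set Implicit Arguments. Unset Strict Implicit.

Section EuclideanNorm.
Variable R : realType.
Implicit Types (n m : nat).

Lemma vnorm_ge0 n (v : 'cV[R]_n) : 0 <= vnorm v.
Proof. exact: sqrtr_ge0. Qed.

Lemma sumsq_ge0 n (v : 'cV[R]_n) : 0 <= \sum_(i < n) v i 0 ^+ 2.
Proof. by apply: sumr_ge0 => i _; rewrite sqr_ge0. Qed.

Lemma vnorm0 n : vnorm (0 : 'cV[R]_n) = 0.
Proof. by rewrite /vnorm big1 ?sqrtr0 // => i _; rewrite mxE expr0n. Qed.

Lemma vnormZ n (a : R) (v : 'cV[R]_n) : vnorm (a *: v) = `|a| * vnorm v.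
Proof.
rewrite /vnorm (eq_bigr (fun i => a ^+ 2 * v i 0 ^+ 2)); last first.
  by move=> i _; rewrite mxE exprMn.
by rewrite -mulr_sumr sqrtrM ?sqr_ge0 // sqrtr_sqr.
Qed.

Lemma vnorm_eq0 n (v : 'cV[R]_n) : vnorm v = 0 -> v = 0.
Proof.
move=> /eqP; rewrite sqrtr_eq0 => sum_le0.
have sum_eq0 : \sum_(i < n) v i 0 ^+ 2 = 0.
  by apply/eqP; rewrite eq_le sum_le0 sumsq_ge0.
apply/matrixP => i j; rewrite (ord1 j) mxE.
have := psumr_eq0P (fun i _ => sqr_ge0 (v i 0)) sum_eq0 isT.
by move/(_ i)/eqP; rewrite sqrf_eq0 => /eqP.
Qed.

Lemma ler_coord_vnorm n (v : 'cV[R]_n) j : `|v j 0| <= vnorm v.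
Proof.
rewrite -sqrtr_sqr /vnorm ler_sqrt ?sumsq_ge0 //.
by rewrite (bigD1 j) //= lerDl; apply: sumr_ge0 => i _; exact: sqr_ge0.
Qed.

Lemma cauchy_schwarz_vnorm n (a b : 'cV[R]_n) :
  \sum_(i < n) a i 0 * b i 0 <= vnorm a * vnorm b.
Proof.
have [/vnorm_eq0 -> | a0] := eqVneq (vnorm a) 0.
  by rewrite big1 ?mulr_ge0 ?vnorm_ge0 // => i _; rewrite mxE mul0r.
have [/vnorm_eq0 -> | b0] := eqVneq (vnorm b) 0.
  by rewrite big1 ?mulr_ge0 ?vnorm_ge0 // => i _; rewrite mxE mulr0.
set sa := vnorm a; set sb := vnorm b; set P := \sum_(i < n) a i 0 * b i 0.
have sa_gt0 : 0 < sa by rewrite lt_def a0 vnorm_ge0.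
have sb_gt0 : 0 < sb by rewrite lt_def b0 vnorm_ge0.
have Sa : \sum_(i < n) a i 0 ^+ 2 = sa ^+ 2 by rewrite sqr_sqrtr ?sumsq_ge0.
have Sb : \sum_(i < n) b i 0 ^+ 2 = sb ^+ 2 by rewrite sqr_sqrtr ?sumsq_ge0.
(* expand [0 <= \sum_i (sb a_i - sa b_i)^2] *)
have expand : \sum_(i < n) (a i 0 * sb - b i 0 * sa) ^+ 2 =
    (\sum_(i < n) a i 0 ^+ 2) * sb ^+ 2 - P * (2 * sa * sb)
    + (\sum_(i < n) b i 0 ^+ 2) * sa ^+ 2.
  rewrite /P !mulr_suml -sumrB -big_split /=; apply: eq_bigr => i _.
  by rewrite /GRing.exp /=; ring.
have : 0 <= \sum_(i < n) (a i 0 * sb - b i 0 * sa) ^+ 2.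
  by apply: sumr_ge0 => i _; exact: sqr_ge0.
rewrite expand Sa Sb => sq_ge0.
have : 0 <= 2 * sa * sb * (sa * sb - P) by nra.
by rewrite pmulr_rge0 ?mulr_gt0 // subr_ge0.
Qed.

Lemma ler_vnormD n (a b : 'cV[R]_n) : vnorm (a + b) <= vnorm a + vnorm b.
Proof.
have -> : vnorm a + vnorm b = Num.sqrt ((vnorm a + vnorm b) ^+ 2).
  by rewrite sqrtr_sqr ger0_norm // addr_ge0 ?vnorm_ge0.
rewrite {1}/vnorm ler_sqrt ?sqr_ge0 // sqrrD.
rewrite (eq_bigr (fun i => a i 0 ^+ 2 + (a i 0 * b i 0) *+ 2 + b i 0 ^+ 2));
  last by move=> i _; rewrite !mxE sqrrD.
rewrite !big_split /= /vnorm !sqr_sqrtr ?sumsq_ge0 //.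
by rewrite lerD2r lerD2l mulr2n; apply: lerD; exact: cauchy_schwarz_vnorm.
Qed.

Lemma ler_vnorm_sum n (I : Type) (r : seq I) (P : pred I) (F : I -> 'cV[R]_n) :
  vnorm (\sum_(i <- r | P i) F i) <= \sum_(i <- r | P i) vnorm (F i).
Proof.
apply: (big_rec2 (fun x y => vnorm x <= y)); first by rewrite vnorm0.
by move=> i y1 y2 _ le_y; apply: le_trans (ler_vnormD _ _) _; rewrite lerD2l.
Qed.

Lemma mulmx_sum_col n m (M : 'M[R]_(n, m)) (v : 'cV[R]_m) :
  M *m v = \sum_(j < m) v j 0 *: col j M.
Proof.
apply/matrixP => i k; rewrite (ord1 k) !mxE summxE; apply: eq_bigr => j _.
by rewrite !mxE mulrC.
Qed.

Local Open Scope classical_set_scope.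

Lemma ler_vnorm_mulmx n m (M : 'M[R]_(n, m)) (v : 'cV[R]_m) :
  vnorm (M *m v) <= mnorm M * vnorm v.
Proof.
rewrite /mnorm.
set S := [set vnorm (M *m v) | v in [set v : 'cV[R]_m | vnorm v <= 1]].
have S_ub : has_ubound S.
  exists (\sum_(j < m) vnorm (col j M)) => _ [u /= u_le1 <-].
  rewrite mulmx_sum_col; apply: le_trans (ler_vnorm_sum _ _ _) _.
  apply: ler_sum => j _; rewrite vnormZ ler_piMl ?vnorm_ge0 //.
  exact: le_trans (ler_coord_vnorm _ _) u_le1.
have [/vnorm_eq0 -> | v0] := eqVneq (vnorm v) 0.
  by rewrite mulmx0 !vnorm0 mulr0.
have v_gt0 : 0 < vnorm v by rewrite lt_def v0 vnorm_ge0.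
have normalized_in_S : S (vnorm (M *m ((vnorm v)^-1 *: v))).
  exists ((vnorm v)^-1 *: v) => //=.
  by rewrite vnormZ ger0_norm ?invr_ge0 ?vnorm_ge0 // mulVf.
have := ub_le_sup S_ub normalized_in_S.
rewrite -scalemxAr vnormZ ger0_norm ?invr_ge0 ?vnorm_ge0 //.
by rewrite mulrC ler_pdivrMr.
Qed.

Lemma vnorm_mulmx_le n m (M : 'M[R]_(n, m)) (v : 'cV[R]_m) (a b : R) :
  0 <= a -> mnorm M <= a -> vnorm v <= b -> vnorm (M *m v) <= a * b.
Proof.
move=> a_ge0 Ma vb; apply: le_trans (ler_vnorm_mulmx _ _) _.
by apply: le_trans (ler_wpM2r (vnorm_ge0 v) Ma) _; rewrite ler_wpM2l.
Qed.

End EuclideanNorm.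

Lemma geometric_sum_le (R : realFieldType) (rho : R) t :
  0 <= rho -> rho < 1 -> \sum_(i < t) rho ^+ i <= (1 - rho)^-1.
Proof.
move=> rho_ge0 rho_lt1; rewrite -[(1 - rho)^-1]mulr1 ler_pdivlMl ?subr_gt0 //.
have -> : (1 - rho) * \sum_(i < t) rho ^+ i = 1 - rho ^+ t.
  by rewrite -[1 - rho ^+ t]opprB subrX1 -mulNr opprB.
by rewrite gerBl exprn_ge0.
Qed.

Section StateTransition.
Variables (R : realType) (n : nat) (Acl : nat -> 'M[R]_n).

Lemma Phi_id k : Phi Acl k k = 1%:M.
Proof. by rewrite /Phi subnn. Qed.

Lemma PhiS k l : (l <= k)%N -> Phi Acl k.+1 l = Acl k *m Phi Acl k l.
Proof. by move=> lk; rewrite /Phi subSn //= subnKC. Qed.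

Variables (d e : nat -> 'cV[R]_n).
Hypothesis e_rec : forall k, e k.+1 = Acl k *m e k + d k.

Lemma variation_of_constants t :
  e t = Phi Acl t 0 *m e 0 + \sum_(l < t) Phi Acl t l.+1 *m d l.
Proof.
elim: t => [|t IH]; first by rewrite Phi_id mul1mx big_ord0 addr0.
rewrite e_rec IH big_ord_recr /= Phi_id mul1mx mulmxDr mulmxA -PhiS //.
rewrite mulmx_sumr addrA; congr (_ + _ + _); apply: eq_bigr => l _.
by rewrite mulmxA -PhiS.
Qed.

Lemma vnorm_trajectory_le (c rho D : R) :
  0 <= c -> 0 <= rho -> rho < 1 ->
  (forall k, vnorm (d k) <= D) ->
  (forall k l, (l <= k)%N -> mnorm (Phi Acl k l) <= c * rho ^+ (k - l)) ->
  forall t, vnorm (e t) <= c * D / (1 - rho) + c * vnorm (e 0) * rho ^+ t.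
Proof.
move=> c_ge0 rho_ge0 rho_lt1 dD Phi_le t.
have crho_ge0 k : 0 <= c * rho ^+ k by rewrite mulr_ge0 ?exprn_ge0.
have D_ge0 : 0 <= D := le_trans (vnorm_ge0 _) (dD 0%N).
rewrite variation_of_constants addrC; apply: le_trans (ler_vnormD _ _) _.
apply: lerD; last first.
  rewrite mulrAC; apply: vnorm_mulmx_le => //.
  by have := Phi_le t 0%N (leq0n t); rewrite subn0.
apply: le_trans (ler_vnorm_sum _ _ _) _.
apply: (@le_trans _ _ (\sum_(l < t) c * rho ^+ (t - l.+1) * D)).
  by apply: ler_sum => l _; apply: vnorm_mulmx_le => //; exact: Phi_le.
(* reversing the summation turns the convolution into a geometric sum *)
have -> : \sum_(l < t) c * rho ^+ (t - l.+1) * D =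
          c * D * \sum_(i < t) rho ^+ i.
  rewrite mulr_sumr (reindex_inj rev_ord_inj) /=; apply: eq_bigr => l _.
  by rewrite subnSK // subKn 1?ltnW // mulrAC.
by rewrite ler_wpM2l ?mulr_ge0 ?geometric_sum_le.
Qed.

End StateTransition.

Section LimitSuperior.
Import numFieldNormedType.Exports.
Local Open Scope classical_set_scope.
Local Open Scope ereal_scope.
Variable R : realType.

Lemma le_limn_esup (u v : (\bar R)^nat) :
  (forall t, u t <= v t) -> limn_esup u <= limn_esup v.
Proof.
move=> uv; rewrite !limn_esup_lim.
apply: lee_lim; [exact: is_cvg_esups | exact: is_cvg_esups |].
apply: nearW => N; apply: ge_ereal_sup => _ [k /= Nk <-].
by apply: le_ereal_sup_tmp; exists (v k); [exists k | exact: uv].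
Qed.

Lemma limn_esup_le_geometric (u : R^nat) (a K rho : R) :
  (0 <= rho)%R -> (rho < 1)%R -> (forall t, u t <= a + K * rho ^+ t)%R ->
  limn_esup (fun t => (u t)%:E) <= a%:E.
Proof.
move=> rho_ge0 rho_lt1 u_le.
have cvg_bound : (fun t => (a + K * rho ^+ t)%:E) @ \oo --> a%:E.
  apply: cvg_EFin; first exact: nearW.
  rewrite -[X in _ --> X]addr0; apply: cvgD; first exact: cvg_cst.
  by apply: cvg_geometric; rewrite ger0_norm.
rewrite -(cvg_limn_einf_sup cvg_bound).2.
by apply: le_limn_esup => t; rewrite lee_fin.
Qed.

End LimitSuperior.

Theorem theorem2 (R : realType) (n m : nat)
  (B : 'M[R]_(n, m)) (Acl : nat -> 'M[R]_n)
  (ud : nat -> 'cV[R]_m) (w : nat -> 'cV[R]_n) (e : nat -> 'cV[R]_n)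
  (wbar ubar c rho eps : R) :
  (forall k, vnorm (w k) <= wbar) ->
  (forall k, vnorm (ud k) <= ubar) ->
  (forall k, e k.+1 = Acl k *m e k + (B *m ud k + w k)) ->
  0 < c -> 0 < rho -> rho < 1 ->
  (forall k l, (l <= k)%N -> mnorm (Phi Acl k l) <= c * rho ^+ (k - l)) ->
  0 < eps -> 0 < mnorm B ->
  ubar <= ((1 - rho) * eps - c * wbar) / (c * mnorm B) ->
  eps_compensable e eps.
Proof.
move=> w_le ud_le e_rec c_gt0 rho_gt0 rho_lt1 Phi_le _ B_gt0 ubar_le.
pose D := mnorm B * ubar + wbar.
have d_le k : vnorm (B *m ud k + w k) <= D.
  apply: le_trans (ler_vnormD _ _) _; apply: lerD (w_le k).
  exact: le_trans (ler_vnorm_mulmx _ _) (ler_wpM2l (ltW B_gt0) (ud_le k)).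
have cD_le : c * D / (1 - rho) <= eps.
  rewrite ler_pdivrMr ?subr_gt0 // /D.
  move: ubar_le; rewrite ler_pdivlMr ?mulr_gt0 //; lra.
apply: (limn_esup_le_geometric (K := c * vnorm (e 0)) (ltW rho_gt0) rho_lt1).
move=> t; have := vnorm_trajectory_le e_rec (ltW c_gt0) (ltW rho_gt0) rho_lt1
  d_le Phi_le t.
by move/le_trans; apply; rewrite lerD2r.
Qed.
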